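(* Fix $a>0$ and let $q\to0^+$. Let $x_0$ be the solution of $e^{-x_0}x_0^{a}=q\,\Gamma(a)$ with $x_0\to\infty$ as $q\to0^+$, and let $x$ be the solution of $Q(a,x)=q$. Put $L=\ln x_0$ and $b=1-a$, and $$d_1=L-1,\qquad d_2=\tfrac12\bigl(3b-2bL+L^2-2L+2\bigr),$$ $$d_3=\tfrac16\bigl(24bL-11b^2-24b-6L^2+12L-12-9bL^2+6b^2L+2L^3\bigr),$$ $$d_4=\tfrac1{12}\bigl(72+36L^2+3L^4-72L+162b-168bL-12L^3+25b^3-22bL^3+36b^2L^2-12b^3L+84bL^2+120b^2-114b^2L\bigr).$$ Then for each $K\in\{1,2,3,4\}$, $$x=x_0-L+b\sum_{k=1}^{K}\frac{d_k}{x_0^k}+o\bigl(x_0^{-K}\bigr)\qquad(q\to0^+).$$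
   Context: $Q(a,x)=\frac{1}{\Gamma(a)}\int_x^\infty t^{a-1}e^{-t}\,dt$ for $a>0$, $x>0$ (the regularized upper incomplete gamma function), which has the asymptotic expansion $Q(a,x)\sim\frac{x^{a-1}e^{-x}}{\Gamma(a)}\sum_{n\ge0}\frac{(-1)^n(1-a)_n}{x^n}$ as $x\to\infty$, with $(c)_n=\Gamma(c+n)/\Gamma(c)$. *)

From Stdlib Require Import Reals Lra.
Open Scope R_scope.

(* Integrand of the gamma function: t^(a-1) e^(-t)  (used only for t > 0). *)
Definition gamma_integrand (a : R) (t : R) : R := Rpower t (a - 1) * exp (- t).

(* [is_Gamma a G]: G = Gamma(a) = \int_0^\infty t^(a-1) e^(-t) dt,
   as an improper Riemann integral (limit e -> 0+, T -> +infinity). *)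
Definition is_Gamma (a G : R) : Prop :=
  forall eps : R, 0 < eps ->
    exists delta M : R, 0 < delta /\
      forall e T : R, 0 < e < delta -> M <= T ->
        exists pr : Riemann_integrable (gamma_integrand a) e T,
          Rabs (RiemannInt pr - G) < eps.

(* [is_upper_gamma a x v]: v = \int_x^\infty t^(a-1) e^(-t) dt  (x > 0),
   as an improper Riemann integral (limit T -> +infinity). *)
Definition is_upper_gamma (a x v : R) : Prop :=
  forall eps : R, 0 < eps ->
    exists M : R, forall T : R, M <= T ->
      exists pr : Riemann_integrable (gamma_integrand a) x T,
        Rabs (RiemannInt pr - v) < eps.

(* [Q_eq a x q]: Q(a,x) = q, where Q(a,x) = Gamma(a,x)/Gamma(a) is the
   regularized upper incomplete gamma function. *)
Definition Q_eq (a x q : R) : Prop :=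
  exists G v : R, is_Gamma a G /\ is_upper_gamma a x v /\ q = v / G.

Definition dcoef (b L : R) (k : nat) : R :=
  match k with
  | 1%nat => L - 1
  | 2%nat => / 2 * (3 * b - 2 * b * L + L ^ 2 - 2 * L + 2)
  | 3%nat => / 6 * (24 * b * L - 11 * b ^ 2 - 24 * b - 6 * L ^ 2 + 12 * L - 12
                    - 9 * b * L ^ 2 + 6 * b ^ 2 * L + 2 * L ^ 3)
  | 4%nat => / 12 * (72 + 36 * L ^ 2 + 3 * L ^ 4 - 72 * L + 162 * b - 168 * b * L
                     - 12 * L ^ 3 + 25 * b ^ 3 - 22 * b * L ^ 3 + 36 * b ^ 2 * L ^ 2
                     - 12 * b ^ 3 * L + 84 * b * L ^ 2 + 120 * b ^ 2 - 114 * b ^ 2 * L)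
  | _ => 0
  end.

Definition approx (a x0 : R) (K : nat) : R :=
  let L := ln x0 in let b := 1 - a in
  x0 - L + b * sum_f_R0 (fun i => dcoef b L (S i) / x0 ^ (S i)) (K - 1).

From Stdlib Require Import Reals Lra Lia.
From Coquelicot Require Import Coquelicot.
Open Scope R_scope.

(* Write y = x0(q), L = ln y, b = 1 - a and xs = y - L + b sum_(k=1..4) d_k / y^k,
   which is [approx a y 4].  The proof has three parts.

   1. Calculus of truncated expansions as y -> +oo.  A function is polylog-bounded
      ([Pb]) if it is O((1 + ln y)^m), of order five ([O5]) if y^5 f is
      polylog-bounded.  [expands f c] says f = c_0 + c_1/y + ... + c_4/y^4 + O5 with
      polylog-bounded c_k; expansions are closed under sums, products, quartic
      polynomials, and u |-> ln (1 + u), 1 / (1 + u) for u = O(polylog / y).  With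
      the coefficients of each intermediate expansion checked by [field], this
      shows that xs solves the model equation
         x - y + ln y = - b (ln x - ln y) + ln S5(x)                      (M)
      up to a residual of order five, where S5 is the 5-term asymptotic series
      x^(1-a) e^x Gamma(a, x) ~ sum_(n<5) (-1)^n (1-a)_n / x^n.
   2. An explicit antiderivative (five integrations by parts at once) gives
      Gamma(a, x) = x^(a-1) e^(-x) (S5(x) + O(x^-5)).  As Gamma(a, x) = q Gamma(a)
      = y^a e^(-y), the exact solution x satisfies (M) with S5(x) perturbed by
      O(x^-5), and a contraction estimate for (M) gives x - xs = o(y^-4).
   3. The truncations K < 4 differ from xs by o(y^-K); the theorem follows. *)

Lemma ln_le_sub1 y : 0 < y -> ln y <= y - 1.
Proof. intros Hy. pose proof (exp_ineq1_le (ln y)) as H. rewrite exp_ln in H; lra. Qed.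

Lemma ln_nonneg y : 1 <= y -> 0 <= ln y.
Proof. intros Hy. rewrite <- ln_1. apply ln_le; lra. Qed.

Lemma inv_le1 y : 1 <= y -> 0 < / y <= 1.
Proof.
  intros Hy. split; [apply Rinv_0_lt_compat; lra|].
  rewrite <- Rinv_1. apply Rinv_le_contravar; lra.
Qed.

Lemma inv_pow_antitone y m n : 1 <= y -> (m <= n)%nat -> (/ y) ^ n <= (/ y) ^ m.
Proof.
  intros Hy Hmn. pose proof (inv_le1 y Hy).
  replace n with (m + (n - m))%nat by lia. rewrite pow_add.
  assert ((/ y) ^ (n - m) <= 1) by (rewrite <- (pow1 (n - m)); apply pow_incr; lra).
  assert (0 <= (/ y) ^ m) by (apply pow_le; lra). nra.
Qed.

Lemma inv_le2 s : / 2 <= s -> 0 < / s <= 2.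
Proof.
  intros Hs. split; [apply Rinv_0_lt_compat; lra|].
  replace 2 with (/ / 2) by field. apply Rinv_le_contravar; lra.
Qed.

Lemma exp_le_mono u v : u <= v -> exp u <= exp v.
Proof. intros H. destruct (Req_dec u v) as [->|]; [lra | left; apply exp_increasing; lra]. Qed.

Lemma exp_pow_nat t k : exp t ^ k = exp (INR k * t).
Proof. rewrite <- Rpower_pow by apply exp_pos. unfold Rpower. now rewrite ln_exp. Qed.

Lemma ln_lipschitz m p q : 0 < m -> m <= p -> m <= q -> Rabs (ln p - ln q) <= Rabs (p - q) / m.
Proof.
  intros Hm Hp Hq.
  assert (Hquot : forall u v, m <= u <= v -> ln v - ln u <= (v - u) / m).
  { intros u v Huv. rewrite <- ln_div by lra.
    pose proof (ln_le_sub1 (v / u) ltac:(apply Rdiv_lt_0_compat; lra)).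
    apply Rle_trans with ((v - u) / u); [replace ((v - u) / u) with (v / u - 1) by (field; lra); lra|].
    unfold Rdiv. apply Rmult_le_compat_l; [lra | apply Rinv_le_contravar; lra]. }
  destruct (Rle_dec p q) as [Hpq | Hpq].
  - assert (ln p <= ln q) by (apply ln_le; lra).
    rewrite Rabs_left1, (Rabs_left1 (p - q)) by lra.
    pose proof (Hquot p q ltac:(lra)). lra.
  - assert (ln q <= ln p) by (apply ln_le; lra).
    rewrite Rabs_right, (Rabs_right (p - q)) by lra.
    exact (Hquot q p ltac:(lra)).
Qed.

Lemma inv_lipschitz m p q : 0 < m -> m <= p -> m <= q -> Rabs (/ p - / q) <= Rabs (p - q) / m ^ 2.
Proof.
  intros Hm Hp Hq.
  replace (/ p - / q) with ((q - p) * / (p * q)) by (field; lra).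
  rewrite Rabs_mult, (Rabs_right (/ (p * q))), <- Rabs_Ropp by (apply Rle_ge, Rlt_le, Rinv_0_lt_compat; nra).
  replace (- (q - p)) with (p - q) by ring.
  apply Rmult_le_compat_l; [apply Rabs_pos|].
  apply Rinv_le_contravar; [apply pow_lt; lra | simpl; rewrite Rmult_1_r; apply Rmult_le_compat; lra].
Qed.

Lemma ln_abs_le1 S : / 2 <= S <= 2 -> Rabs (ln S) <= 1.
Proof.
  intros HS. pose proof (ln_le_sub1 S ltac:(lra)) as Hup.
  pose proof (ln_le_sub1 (/ S) ltac:(apply Rinv_0_lt_compat; lra)) as Hlo.
  rewrite ln_Rinv in Hlo by lra. pose proof (inv_le2 S ltac:(lra)).
  apply Rabs_le; lra.
Qed.

Definition poly4 (p0 p1 p2 p3 p4 u : R) : R := p0 + u * (p1 + u * (p2 + u * (p3 + u * p4))).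
Definition T4 (u : R) : R := poly4 0 1 (- / 2) (/ 3) (- / 4) u.
Definition V4 (u : R) : R := poly4 1 (-1) 1 (-1) 1 u.

(* Remainder of the logarithmic Taylor polynomial, by the mean value theorem:
   the derivative of ln (1 + t) - T4 t is t^4 / (1 + t). *)
Lemma ln_taylor u : Rabs u <= / 2 -> Rabs (ln (1 + u) - T4 u) <= 2 * Rabs u ^ 5.
Proof.
  intros Hu.
  set (g := fun t => ln (1 + t) - T4 t).
  assert (Hd : forall t, -1 < t -> is_derive g t (t ^ 4 / (1 + t))).
  { intros t Ht. unfold g, T4, poly4. auto_derive; [lra | field; lra]. }
  assert (Hrange : forall t, Rmin 0 u <= t <= Rmax 0 u -> Rabs t <= Rabs u /\ -1 < t).
  { intros t Ht. unfold Rmin, Rmax in Ht. destruct (Rle_dec 0 u).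
    - rewrite !Rabs_right in *; lra.
    - rewrite !Rabs_left1 in *; lra. }
  destruct (MVT_gen g 0 u (fun t => t ^ 4 / (1 + t))) as (c & Hc & Heq).
  { intros t Ht. apply Hd, Hrange. lra. }
  { intros t Ht. apply continuity_pt_filterlim, (ex_derive_continuous g).
    eexists. apply Hd, Hrange, Ht. }
  assert (Hg0 : g 0 = 0) by (unfold g, T4, poly4; rewrite Rplus_0_r, ln_1; simpl; field).
  destruct (Hrange c Hc) as [Hcu Hc1].
  change (ln (1 + u) - T4 u) with (g u).
  rewrite Hg0, !Rminus_0_r in Heq. rewrite Heq.
  assert (Hinv : 0 < / (1 + c) <= 2).
  { apply inv_le2. assert (Hc2 : Rabs c <= / 2) by lra. apply Rabs_le_between in Hc2. lra. }
  unfold Rdiv. rewrite !Rabs_mult, <- RPow_abs, (Rabs_right (/ (1 + c))) by lra.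
  assert (Rabs c ^ 4 <= Rabs u ^ 4) by (apply pow_incr; split; [apply Rabs_pos | lra]).
  pose proof (pow_le (Rabs c) 4 (Rabs_pos c)). pose proof (Rabs_pos u).
  replace (2 * Rabs u ^ 5) with (Rabs u ^ 4 * 2 * Rabs u) by ring.
  apply Rmult_le_compat_r; [lra|]. apply Rmult_le_compat; lra.
Qed.

(* Remainder of the Taylor polynomial of 1 / (1 + u): it equals - u^5 / (1 + u). *)
Lemma inv_taylor u : Rabs u <= / 2 -> Rabs (/ (1 + u) - V4 u) <= 2 * Rabs u ^ 5.
Proof.
  intros Hu. assert (Hu' := Hu). apply Rabs_le_between in Hu'.
  replace (/ (1 + u) - V4 u) with (- u ^ 5 * / (1 + u)) by (unfold V4, poly4; field; lra).
  assert (Hinv : 0 < / (1 + u) <= 2) by (apply inv_le2; lra).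
  rewrite Rabs_mult, Rabs_Ropp, <- RPow_abs, (Rabs_right (/ (1 + u))) by lra.
  pose proof (pow_le (Rabs u) 5 (Rabs_pos u)). nra.
Qed.

Lemma monomial_sum_bound n u v : Rabs u <= 1 -> Rabs v <= 1 ->
  Rabs (sum_f_R0 (fun i => u ^ i * v ^ (n - i)) n) <= INR (S n).
Proof.
  intros Hu Hv. eapply Rle_trans; [apply sum_f_R0_triangle|].
  rewrite <- (Rmult_1_l (INR (S n))), <- sum_cte.
  apply sum_Rle. intros i _. rewrite Rabs_mult, <- !RPow_abs.
  assert (Rabs u ^ i <= 1) by (rewrite <- (pow1 i); apply pow_incr; split; [apply Rabs_pos | lra]).
  assert (Rabs v ^ (n - i) <= 1)
    by (rewrite <- (pow1 (n - i)); apply pow_incr; split; [apply Rabs_pos | lra]).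
  pose proof (pow_le _ i (Rabs_pos u)). pose proof (pow_le _ (n - i) (Rabs_pos v)). nra.
Qed.

(* A quartic polynomial is Lipschitz on [-1, 1] with constant |p1| + 2|p2| + 3|p3| + 4|p4|,
   since p(u) - p(v) = (u - v) sum_k p_k sum_(i<k) u^i v^(k-1-i). *)
Definition poly4_lip (p1 p2 p3 p4 : R) : R :=
  Rabs p1 + 2 * Rabs p2 + 3 * Rabs p3 + 4 * Rabs p4.

Lemma poly4_lip_nonneg p1 p2 p3 p4 : 0 <= poly4_lip p1 p2 p3 p4.
Proof.
  unfold poly4_lip. pose proof (Rabs_pos p1). pose proof (Rabs_pos p2).
  pose proof (Rabs_pos p3). pose proof (Rabs_pos p4). lra.
Qed.

Lemma poly4_lipschitz p0 p1 p2 p3 p4 u v : Rabs u <= 1 -> Rabs v <= 1 ->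
  Rabs (poly4 p0 p1 p2 p3 p4 u - poly4 p0 p1 p2 p3 p4 v) <= poly4_lip p1 p2 p3 p4 * Rabs (u - v).
Proof.
  intros Hu Hv.
  set (s n := sum_f_R0 (fun i => u ^ i * v ^ (n - i)) n).
  replace (poly4 p0 p1 p2 p3 p4 u - poly4 p0 p1 p2 p3 p4 v)
    with ((p1 * s 0%nat + p2 * s 1%nat + p3 * s 2%nat + p4 * s 3%nat) * (u - v))
    by (unfold s, poly4; simpl; ring).
  rewrite Rabs_mult. apply Rmult_le_compat_r; [apply Rabs_pos|].
  pose proof (monomial_sum_bound 0 u v Hu Hv). pose proof (monomial_sum_bound 1 u v Hu Hv).
  pose proof (monomial_sum_bound 2 u v Hu Hv). pose proof (monomial_sum_bound 3 u v Hu Hv).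
  fold (s 0%nat) (s 1%nat) (s 2%nat) (s 3%nat) in *. simpl INR in *.
  pose proof (Rabs_triang (p1 * s 0%nat + p2 * s 1%nat + p3 * s 2%nat) (p4 * s 3%nat)).
  pose proof (Rabs_triang (p1 * s 0%nat + p2 * s 1%nat) (p3 * s 2%nat)).
  pose proof (Rabs_triang (p1 * s 0%nat) (p2 * s 1%nat)).
  rewrite !Rabs_mult in *.
  pose proof (Rabs_pos p1). pose proof (Rabs_pos p2). pose proof (Rabs_pos p3). pose proof (Rabs_pos p4).
  unfold poly4_lip. nra.
Qed.

Notation at_infty := (Rbar_locally p_infty).

Lemma at_infty_ge c : at_infty (fun y => c <= y).
Proof. exists c. intros y Hy. lra. Qed.

Lemma logw_ge1 y m : 1 <= y -> 1 <= (1 + ln y) ^ m.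
Proof.
  intros Hy. pose proof (ln_nonneg y Hy).
  induction m as [|m IH]; simpl; nra.
Qed.

Lemma logw_mono y m n : 1 <= y -> (m <= n)%nat -> (1 + ln y) ^ m <= (1 + ln y) ^ n.
Proof. intros Hy Hmn. pose proof (ln_nonneg y Hy). apply Rle_pow; [lra | exact Hmn]. Qed.

Definition Pb (f : R -> R) : Prop :=
  exists C m, 0 <= C /\ at_infty (fun y => Rabs (f y) <= C * (1 + ln y) ^ m).

Lemma Pb_le f g : at_infty (fun y => Rabs (f y) <= Rabs (g y)) -> Pb g -> Pb f.
Proof.
  intros Hfg (C & m & HC & Hg). exists C, m. split; [exact HC|].
  generalize (filter_and _ _ Hfg Hg). apply filter_imp. intros y [H1 H2]. lra.
Qed.

Lemma Pb_ext f g : at_infty (fun y => f y = g y) -> Pb f -> Pb g.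
Proof.
  intros Hfg. apply Pb_le. generalize Hfg. apply filter_imp. intros y ->. lra.
Qed.

Lemma Pb_const c : Pb (fun _ => c).
Proof.
  exists (Rabs c), 0%nat. split; [apply Rabs_pos|].
  apply filter_forall. intros y. simpl. lra.
Qed.

Lemma Pb_ln : Pb ln.
Proof.
  exists 1, 1%nat. split; [lra|].
  generalize (at_infty_ge 1). apply filter_imp. intros y Hy.
  pose proof (ln_nonneg y Hy). rewrite Rabs_right by lra. simpl. lra.
Qed.

Lemma Pb_inv : Pb (fun y => / y).
Proof.
  exists 1, 0%nat. split; [lra|].
  generalize (at_infty_ge 1). apply filter_imp. intros y Hy.
  pose proof (inv_le1 y Hy). rewrite Rabs_right by lra. simpl. lra.
Qed.

Lemma Pb_plus f g : Pb f -> Pb g -> Pb (fun y => f y + g y).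
Proof.
  intros (C1 & m1 & HC1 & H1) (C2 & m2 & HC2 & H2).
  exists (C1 + C2), (m1 + m2)%nat. split; [lra|].
  generalize (filter_and _ _ (filter_and _ _ H1 H2) (at_infty_ge 1)).
  apply filter_imp. intros y [[Hf Hg] Hy].
  pose proof (logw_mono y m1 (m1 + m2) Hy ltac:(lia)).
  pose proof (logw_mono y m2 (m1 + m2) Hy ltac:(lia)).
  eapply Rle_trans; [apply Rabs_triang|]. nra.
Qed.

Lemma Pb_mult f g : Pb f -> Pb g -> Pb (fun y => f y * g y).
Proof.
  intros (C1 & m1 & HC1 & H1) (C2 & m2 & HC2 & H2).
  exists (C1 * C2), (m1 + m2)%nat. split; [nra|].
  generalize (filter_and _ _ H1 H2). apply filter_imp. intros y [Hf Hg].
  rewrite Rabs_mult, pow_add.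
  replace (C1 * C2 * ((1 + ln y) ^ m1 * (1 + ln y) ^ m2))
    with ((C1 * (1 + ln y) ^ m1) * (C2 * (1 + ln y) ^ m2)) by ring.
  apply Rmult_le_compat; auto; apply Rabs_pos.
Qed.

Lemma Pb_opp f : Pb f -> Pb (fun y => - f y).
Proof.
  apply Pb_le. apply filter_forall. intros y. rewrite Rabs_Ropp. lra.
Qed.

Lemma Pb_minus f g : Pb f -> Pb g -> Pb (fun y => f y - g y).
Proof. intros Hf Hg. apply (Pb_plus f (fun y => - g y) Hf (Pb_opp g Hg)). Qed.

Lemma Pb_pow f n : Pb f -> Pb (fun y => f y ^ n).
Proof.
  intros Hf. induction n as [|n IH]; simpl.
  - apply Pb_const.
  - exact (Pb_mult f _ Hf IH).
Qed.

Lemma Pb_sum (F : nat -> R -> R) n :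
  (forall i, Pb (F i)) -> Pb (fun y => sum_f_R0 (fun i => F i y) n).
Proof.
  intros HF. induction n as [|n IH]; simpl; [apply HF|].
  exact (Pb_plus _ _ IH (HF (S n))).
Qed.

Ltac pb := repeat first [ apply Pb_plus | apply Pb_minus | apply Pb_mult | apply Pb_opp
  | apply Pb_pow | apply Pb_ln | apply Pb_inv | apply Pb_const ].

(* Polylogarithms are o(sqrt y): (1 + ln y)^m <= K e^(ln y / 2), using
   1 + L <= 2n e^(L / 2n) with n = m + 1. *)
Lemma logw_le_sqrt m : exists K, 0 < K /\
  forall y, 1 <= y -> (1 + ln y) ^ m <= K * sqrt y.
Proof.
  set (n := INR (S m)).
  assert (Hn : INR m + 1 = n) by (unfold n; rewrite S_INR; ring).
  pose proof (pos_INR m).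
  exists ((2 * n) ^ m). split; [apply pow_lt; lra|].
  intros y Hy. pose proof (ln_nonneg y Hy) as HL.
  set (t := exp (ln y / (2 * n))).
  assert (Ht : 1 + ln y / (2 * n) <= t) by apply exp_ineq1_le.
  assert (Hlin : 1 + ln y <= 2 * n * t).
  { assert (0 <= ln y / (2 * n)) by (apply Rmult_le_pos; [lra | apply Rlt_le, Rinv_0_lt_compat; lra]).
    replace (1 + ln y) with (2 * n * (ln y / (2 * n)) + 1) by (field; lra). nra. }
  assert (Hsq : t ^ m <= sqrt y).
  { rewrite <- Rpower_sqrt by lra. unfold t, Rpower. rewrite exp_pow_nat.
    apply exp_le_mono. rewrite <- Hn.
    replace (INR m * (ln y / (2 * (INR m + 1)))) with (/ 2 * ln y * (INR m / (INR m + 1)))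
      by (field; lra).
    pose proof (ln_nonneg y Hy).
    assert (Hfrac : 0 <= INR m / (INR m + 1) <= 1).
    { split; [apply Rmult_le_pos; [lra | apply Rlt_le, Rinv_0_lt_compat; lra]|].
      apply Rmult_le_reg_r with (INR m + 1); [lra|].
      unfold Rdiv. rewrite Rmult_assoc, Rinv_l by lra. lra. }
    nra. }
  apply Rle_trans with ((2 * n * t) ^ m); [apply pow_incr; lra|].
  rewrite Rpow_mult_distr. apply Rmult_le_compat_l; [apply pow_le; lra | exact Hsq].
Qed.

Lemma Pb_small f : Pb f -> forall eps, 0 < eps -> at_infty (fun y => Rabs (f y) * / y <= eps).
Proof.
  intros (C & m & HC & Hf) eps Heps.
  destruct (logw_le_sqrt m) as (K & HK & Hlog).
  generalize (filter_and _ _ Hf (at_infty_ge (Rmax 1 (((C + 1) * K / eps) ^ 2)))).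
  apply filter_imp. intros y [Hfy Hy].
  assert (Hy1 : 1 <= y) by (eapply Rle_trans; [apply Rmax_l | exact Hy]).
  assert (Hsq : (C + 1) * K / eps <= sqrt y).
  { rewrite <- (sqrt_pow2 ((C + 1) * K / eps)) by (apply Rlt_le, Rdiv_lt_0_compat; nra).
    apply sqrt_le_1_alt. eapply Rle_trans; [apply Rmax_r | exact Hy]. }
  assert (Hs : 0 < sqrt y) by (apply sqrt_lt_R0; lra).
  assert (Hyy : sqrt y * sqrt y = y) by (apply sqrt_sqrt; lra).
  pose proof (logw_ge1 y m Hy1).
  apply Rle_trans with (C * (K * sqrt y) * / y).
  { apply Rmult_le_compat_r; [apply Rlt_le, Rinv_0_lt_compat; lra|].
    eapply Rle_trans; [exact Hfy|]. apply Rmult_le_compat_l; [lra | now apply Hlog]. }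
  assert (Hinv : / y = / sqrt y * / sqrt y) by (rewrite <- Rinv_mult, Hyy; reflexivity).
  rewrite Hinv. replace (C * (K * sqrt y) * (/ sqrt y * / sqrt y)) with (C * K / sqrt y)
    by (field; lra).
  apply Rle_trans with ((C + 1) * K / sqrt y).
  { unfold Rdiv. apply Rmult_le_compat_r; [apply Rlt_le, Rinv_0_lt_compat; lra | nra]. }
  unfold Rdiv in *. apply Rmult_le_reg_r with (sqrt y); [lra|].
  rewrite Rmult_assoc, Rinv_l, Rmult_1_r by lra.
  apply Rmult_le_reg_r with (/ eps); [apply Rinv_0_lt_compat; lra|].
  replace (eps * sqrt y * / eps) with (sqrt y) by (field; lra). lra.
Qed.

Definition O5 (f : R -> R) : Prop := Pb (fun y => f y * y ^ 5).

Lemma O5_le f g : at_infty (fun y => Rabs (f y) <= Rabs (g y)) -> O5 g -> O5 f.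
Proof.
  intros Hfg. apply Pb_le.
  generalize (filter_and _ _ Hfg (at_infty_ge 0)). apply filter_imp. intros y [H Hy].
  rewrite !Rabs_mult. apply Rmult_le_compat_r; [apply Rabs_pos | exact H].
Qed.

Lemma O5_ext f g : at_infty (fun y => f y = g y) -> O5 f -> O5 g.
Proof.
  intros Hfg. apply Pb_ext. generalize Hfg. apply filter_imp. intros y ->. reflexivity.
Qed.

Lemma O5_zero : O5 (fun _ => 0).
Proof. apply (Pb_ext (fun _ => 0)); [apply filter_forall; intros; ring | apply Pb_const]. Qed.

Lemma O5_plus f g : O5 f -> O5 g -> O5 (fun y => f y + g y).
Proof.
  intros Hf Hg. apply (Pb_ext _ _ (filter_forall _ (fun y => eq_sym (Rmult_plus_distr_r _ _ _)))).
  exact (Pb_plus _ _ Hf Hg).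
Qed.

Lemma O5_mult f g : O5 f -> Pb g -> O5 (fun y => f y * g y).
Proof.
  intros Hf Hg. apply (Pb_ext (fun y => f y * y ^ 5 * g y)).
  - apply filter_forall. intros y. ring.
  - exact (Pb_mult _ _ Hf Hg).
Qed.

Lemma O5_mult_l f g : Pb g -> O5 f -> O5 (fun y => g y * f y).
Proof.
  intros Hg Hf. apply (O5_ext (fun y => f y * g y)).
  - apply filter_forall. intros y. ring.
  - exact (O5_mult f g Hf Hg).
Qed.

Lemma O5_w5 g : Pb g -> O5 (fun y => (/ y) ^ 5 * g y).
Proof.
  apply Pb_ext. generalize (at_infty_ge 1). apply filter_imp. intros y Hy.
  field. lra.
Qed.

Lemma O5_Pb f : O5 f -> Pb f.
Proof.
  intros Hf. apply (Pb_ext (fun y => f y * y ^ 5 * (/ y) ^ 5)).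
  - generalize (at_infty_ge 1). apply filter_imp. intros y Hy.
    field. lra.
  - apply Pb_mult; [exact Hf | pb].
Qed.

Lemma O5_mul_y f : O5 f -> Pb (fun y => f y * y).
Proof.
  intros Hf. apply (Pb_ext (fun y => f y * y ^ 5 * (/ y) ^ 4)).
  - generalize (at_infty_ge 1). apply filter_imp. intros y Hy.
    field. lra.
  - apply Pb_mult; [exact Hf | pb].
Qed.

Lemma O5_small f : O5 f -> forall eps, 0 < eps ->
  at_infty (fun y => Rabs (f y) <= eps * (/ y) ^ 4).
Proof.
  intros Hf eps Heps. generalize (filter_and _ _ (Pb_small _ Hf eps Heps) (at_infty_ge 1)).
  apply filter_imp. intros y [H Hy].
  rewrite Rabs_mult, (Rabs_right (y ^ 5)) in H by (apply Rle_ge, pow_le; lra).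
  replace (Rabs (f y)) with (Rabs (f y) * y ^ 5 * / y * (/ y) ^ 4)
    by (field; lra).
  apply Rmult_le_compat_r; [apply pow_le, Rlt_le, Rinv_0_lt_compat; lra | exact H].
Qed.

(* A coefficient sequence c (coefficients may depend on y, polylogarithmically)
   and its truncation c_0 + c_1 / y + ... + c_4 / y^4. *)
Definition trunc (c : nat -> R -> R) (y : R) : R :=
  c 0%nat y + c 1%nat y * / y + c 2%nat y * (/ y) ^ 2 + c 3%nat y * (/ y) ^ 3
  + c 4%nat y * (/ y) ^ 4.

Definition PbS (c : nat -> R -> R) : Prop := forall k, Pb (c k).

Definition expands (f : R -> R) (c : nat -> R -> R) : Prop :=
  O5 (fun y => f y - trunc c y) /\ PbS c.

Definition sadd (c d : nat -> R -> R) (k : nat) (y : R) : R := c k y + d k y.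
Definition sscal (r : R) (c : nat -> R -> R) (k : nat) (y : R) : R := r * c k y.
Definition smul (c d : nat -> R -> R) (k : nat) (y : R) : R :=
  sum_f_R0 (fun i => c i y * d (k - i)%nat y) k.
Definition scst (g : R -> R) (k : nat) (y : R) : R := match k with 0%nat => g y | _ => 0 end.
Definition sinv (k : nat) (y : R) : R := match k with 1%nat => 1 | _ => 0 end.

Lemma trunc_Pb c : PbS c -> Pb (trunc c).
Proof. intros Hc. unfold trunc. pb; apply Hc. Qed.

Lemma PbS_add c d : PbS c -> PbS d -> PbS (sadd c d).
Proof. intros Hc Hd k. exact (Pb_plus _ _ (Hc k) (Hd k)). Qed.

Lemma PbS_scal r c : PbS c -> PbS (sscal r c).
Proof. intros Hc k. exact (Pb_mult _ _ (Pb_const r) (Hc k)). Qed.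

Lemma PbS_mul c d : PbS c -> PbS d -> PbS (smul c d).
Proof.
  intros Hc Hd k. apply (Pb_sum (fun i y => c i y * d (k - i)%nat y)).
  intros i. exact (Pb_mult _ _ (Hc i) (Hd _)).
Qed.

Lemma expands_Pb f c : expands f c -> Pb f.
Proof.
  intros [Hf Hc]. apply (Pb_ext (fun y => (f y - trunc c y) + trunc c y)).
  - apply filter_forall. intros y. ring.
  - exact (Pb_plus _ _ (O5_Pb _ Hf) (trunc_Pb c Hc)).
Qed.

Lemma expands_ext f g c : at_infty (fun y => f y = g y) -> expands f c -> expands g c.
Proof.
  intros Hfg [Hf Hc]. split; [|exact Hc].
  apply (O5_ext (fun y => f y - trunc c y)); [|exact Hf].
  generalize Hfg. apply filter_imp. intros y ->. reflexivity.
Qed.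

Lemma expands_coef f c d : (forall k y, (k <= 4)%nat -> c k y = d k y) -> PbS d ->
  expands f c -> expands f d.
Proof.
  intros Hcd Hd [Hf _]. split; [|exact Hd].
  apply (O5_ext (fun y => f y - trunc c y)); [|exact Hf].
  apply filter_forall. intros y. unfold trunc. rewrite !Hcd by lia. reflexivity.
Qed.

Lemma expands_O5 f g c : O5 (fun y => f y - g y) -> expands g c -> expands f c.
Proof.
  intros Hfg [Hg Hc]. split; [|exact Hc].
  apply (O5_ext (fun y => (f y - g y) + (g y - trunc c y))).
  - apply filter_forall. intros y. ring.
  - exact (O5_plus _ _ Hfg Hg).
Qed.

Lemma expands_trunc c : PbS c -> expands (trunc c) c.
Proof.
  intros Hc. split; [|exact Hc].
  apply (O5_ext (fun _ => 0)); [apply filter_forall; intros; ring | apply O5_zero].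
Qed.

Lemma expands_cst g : Pb g -> expands g (scst g).
Proof.
  intros Hg. apply (expands_ext (trunc (scst g))).
  - apply filter_forall. intros y. unfold trunc, scst. ring.
  - apply expands_trunc. intros [|k]; [exact Hg | apply Pb_const].
Qed.

Lemma expands_inv : expands (fun y => / y) sinv.
Proof.
  apply (expands_ext (trunc sinv)).
  - apply filter_forall. intros y. unfold trunc, sinv. ring.
  - apply expands_trunc. intros [|[|k]]; apply Pb_const.
Qed.

Lemma expands_add f g c d : expands f c -> expands g d ->
  expands (fun y => f y + g y) (sadd c d).
Proof.
  intros [Hf Hc] [Hg Hd]. split; [|exact (PbS_add c d Hc Hd)].
  apply (O5_ext (fun y => (f y - trunc c y) + (g y - trunc d y))).
  - apply filter_forall. intros y. unfold trunc, sadd. ring.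
  - exact (O5_plus _ _ Hf Hg).
Qed.

Lemma expands_scal r f c : expands f c -> expands (fun y => r * f y) (sscal r c).
Proof.
  intros [Hf Hc]. split; [|exact (PbS_scal r c Hc)].
  apply (O5_ext (fun y => r * (f y - trunc c y))).
  - apply filter_forall. intros y. unfold trunc, sscal. ring.
  - exact (O5_mult_l _ _ (Pb_const r) Hf).
Qed.

Lemma trunc_mul c d y : trunc c y * trunc d y - trunc (smul c d) y =
  (/ y) ^ 5 * ((c 1%nat y * d 4%nat y + c 2%nat y * d 3%nat y + c 3%nat y * d 2%nat y
                + c 4%nat y * d 1%nat y)
   + / y * (c 2%nat y * d 4%nat y + c 3%nat y * d 3%nat y + c 4%nat y * d 2%nat y)
   + (/ y) ^ 2 * (c 3%nat y * d 4%nat y + c 4%nat y * d 3%nat y)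
   + (/ y) ^ 3 * (c 4%nat y * d 4%nat y)).
Proof. unfold trunc, smul. simpl. ring. Qed.

(* Products: f g - tc td = (f - tc) g + tc (g - td), and tc td differs from
   the truncated Cauchy product by O5 (lemma [trunc_mul]). *)
Lemma expands_mul f g c d : expands f c -> expands g d ->
  expands (fun y => f y * g y) (smul c d).
Proof.
  intros [Hf Hc] [Hg Hd]. split; [|exact (PbS_mul c d Hc Hd)].
  pose proof (expands_Pb g d (conj Hg Hd)) as Hgb.
  apply (O5_ext (fun y => (f y - trunc c y) * g y + trunc c y * (g y - trunc d y)
                          + (trunc c y * trunc d y - trunc (smul c d) y))).
  - apply filter_forall. intros y. ring.
  - apply O5_plus; [apply O5_plus|].
    + exact (O5_mult _ _ Hf Hgb).
    + exact (O5_mult_l _ _ (trunc_Pb c Hc) Hg).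
    + apply (O5_ext _ _ (filter_forall _ (fun y => eq_sym (trunc_mul c d y)))).
      apply O5_w5. pb; first [apply Hc | apply Hd].
Qed.

Lemma expands_O5_of_zero f c : expands f c -> (forall k y, (k <= 4)%nat -> c k y = 0) -> O5 f.
Proof.
  intros [Hf _] Hc. apply (O5_ext (fun y => f y - trunc c y)); [|exact Hf].
  apply filter_forall. intros y. unfold trunc. rewrite !Hc by lia. ring.
Qed.

Lemma expands_Pby f c : expands f c -> (forall y, c 0%nat y = 0) -> Pb (fun y => f y * y).
Proof.
  intros [Hf Hc] H0.
  apply (Pb_ext (fun y => (f y - trunc c y) * y
      + (c 1%nat y + c 2%nat y * / y + c 3%nat y * (/ y) ^ 2 + c 4%nat y * (/ y) ^ 3))).
  - generalize (at_infty_ge 1). apply filter_imp. intros y Hy.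
    unfold trunc. rewrite H0. field. lra.
  - apply Pb_plus; [exact (O5_mul_y _ Hf) | pb; apply Hc].
Qed.

Lemma small_of_Pby f : Pb (fun y => f y * y) -> at_infty (fun y => Rabs (f y) <= / 2).
Proof.
  intros Hf. assert (Hhalf : 0 < / 2) by lra.
  generalize (filter_and _ _ (Pb_small _ Hf (/ 2) Hhalf) (at_infty_ge 1)).
  apply filter_imp. intros y [H Hy].
  rewrite Rabs_mult, (Rabs_right y), Rmult_assoc, Rinv_r, Rmult_1_r in H by lra. exact H.
Qed.

Lemma O5_of_fifth_power f g C : Pb (fun y => f y * y) ->
  at_infty (fun y => Rabs (g y) <= C * Rabs (f y) ^ 5) -> O5 g.
Proof.
  intros Hf Hg. apply (O5_le _ (fun y => (/ y) ^ 5 * (C * (f y * y) ^ 5))).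
  - generalize (filter_and _ _ Hg (at_infty_ge 1)). apply filter_imp. intros y [H Hy].
    eapply Rle_trans; [exact H|].
    replace ((/ y) ^ 5 * (C * (f y * y) ^ 5)) with (C * f y ^ 5) by (field; lra).
    rewrite Rabs_mult, <- RPow_abs.
    apply Rmult_le_compat_r; [apply pow_le, Rabs_pos | apply Rle_abs].
  - apply O5_w5. apply Pb_mult; [apply Pb_const | exact (Pb_pow _ 5 Hf)].
Qed.

Definition spoly4 (p0 p1 p2 p3 p4 : R) (c : nat -> R -> R) : nat -> R -> R :=
  sadd (scst (fun _ => p0)) (smul c (sadd (scst (fun _ => p1)) (smul c
    (sadd (scst (fun _ => p2)) (smul c (sadd (scst (fun _ => p3)) (smul c (scst (fun _ => p4))))))))).

Lemma expands_poly4 p0 p1 p2 p3 p4 f c : expands f c ->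
  expands (fun y => poly4 p0 p1 p2 p3 p4 (f y)) (spoly4 p0 p1 p2 p3 p4 c).
Proof.
  intros Hf. unfold poly4, spoly4.
  repeat first [ apply expands_add | apply expands_mul | exact Hf | apply expands_cst, Pb_const ].
Qed.

(* ln (1 + f) and 1 / (1 + f) for f = O(polylog / y): the Taylor remainders
   are O(|f|^5), hence of order five. *)
Lemma expands_ln1p f c : expands f c -> (forall y, c 0%nat y = 0) ->
  expands (fun y => ln (1 + f y)) (spoly4 0 1 (- / 2) (/ 3) (- / 4) c).
Proof.
  intros Hf H0. pose proof (expands_Pby f c Hf H0) as Hfy.
  apply (expands_O5 _ (fun y => T4 (f y))); [|exact (expands_poly4 _ _ _ _ _ f c Hf)].
  apply (O5_of_fifth_power f _ 2 Hfy).
  generalize (small_of_Pby f Hfy). apply filter_imp. intros y Hy. exact (ln_taylor _ Hy).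
Qed.

Lemma expands_inv1p f c : expands f c -> (forall y, c 0%nat y = 0) ->
  expands (fun y => / (1 + f y)) (spoly4 1 (-1) 1 (-1) 1 c).
Proof.
  intros Hf H0. pose proof (expands_Pby f c Hf H0) as Hfy.
  apply (expands_O5 _ (fun y => V4 (f y))); [|exact (expands_poly4 _ _ _ _ _ f c Hf)].
  apply (O5_of_fifth_power f _ 2 Hfy).
  generalize (small_of_Pby f Hfy). apply filter_imp. intros y Hy. exact (inv_taylor _ Hy).
Qed.

(* The asymptotic series of Q (context of the theorem):
   Gamma(a, x) ~ x^(a-1) e^(-x) sum_n f_n(b) / x^n with f_n(b) = (-1)^n (b)_n, b = 1 - a.
   S5 is its sum up to n = 4 and f5 the first neglected coefficient. *)
Definition f1 b := - b.
Definition f2 b := b * (b + 1).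
Definition f3 b := - (b * (b + 1) * (b + 2)).
Definition f4 b := b * (b + 1) * (b + 2) * (b + 3).
Definition f5 b := - (b * (b + 1) * (b + 2) * (b + 3) * (b + 4)).
Definition S5 b x := poly4 1 (f1 b) (f2 b) (f3 b) (f4 b) (/ x).

Definition S5_lip (b : R) : R := poly4_lip (f1 b) (f2 b) (f3 b) (f4 b).

Lemma S5_lip_nonneg b : 0 <= S5_lip b.
Proof. apply poly4_lip_nonneg. Qed.

Lemma S5_lipschitz b x x' : 1 <= x -> 1 <= x' ->
  Rabs (S5 b x - S5 b x') <= S5_lip b * Rabs (/ x - / x').
Proof.
  intros Hx Hx'. pose proof (inv_le1 x Hx). pose proof (inv_le1 x' Hx').
  apply poly4_lipschitz; rewrite Rabs_right; lra.
Qed.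

Lemma S5_near1 b x : 1 <= x -> Rabs (S5 b x - 1) <= S5_lip b * / x.
Proof.
  intros Hx. pose proof (inv_le1 x Hx).
  assert (Hu : Rabs (/ x) <= 1) by (rewrite Rabs_right; lra).
  assert (H0 : Rabs 0 <= 1) by (rewrite Rabs_R0; lra).
  pose proof (poly4_lipschitz 1 (f1 b) (f2 b) (f3 b) (f4 b) (/ x) 0 Hu H0) as Hlip.
  rewrite Rminus_0_r, (Rabs_right (/ x)) in Hlip by lra.
  replace (poly4 1 (f1 b) (f2 b) (f3 b) (f4 b) 0) with 1 in Hlip by (unfold poly4; ring).
  exact Hlip.
Qed.


(* The approximate solution xs = y - ln y + z, with z = b sum_(k=1..4) d_k / y^k,
   its relative correction u = (z - ln y) / y (so that xs = y (1 + u)), and the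
   residual of xs in the model equation (M). *)
Definition zs (b y : R) : R := b * sum_f_R0 (fun i => dcoef b (ln y) (S i) / y ^ (S i)) 3.
Definition xs (b y : R) : R := y - ln y + zs b y.
Definition us (b y : R) : R := (zs b y - ln y) / y.
Definition residual (b y : R) : R :=
  (xs b y - y + ln y) + b * (ln (xs b y) - ln y) - ln (S5 b (xs b y)).

(* Coefficient sequences, in powers of 1/y with L = ln y, of z, u, ln (1 + u),
   1 / (1 + u), S5(xs) - 1 and ln S5(xs).  They were obtained by formal series
   manipulation; each one is certified by the tactic [coef_eq] below. *)
Definition zS (b : R) (k : nat) (y : R) : R :=
  match k with 0%nat => 0 | _ => b * dcoef b (ln y) k end.

Definition uS (b : R) (k : nat) (y : R) : R :=
  let L := ln y in
  match k with
  | 1%nat => - L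
  | 2%nat => b * (L - 1)
  | 3%nat => b + (3/2) * b ^ 2 - L * b - L * b ^ 2 + (1/2) * L ^ 2 * b
  | 4%nat => - 2 * b - 4 * b ^ 2 - (11/6) * b ^ 3 + 2 * L * b + 4 * L * b ^ 2 + L * b ^ 3
             - L ^ 2 * b - (3/2) * L ^ 2 * b ^ 2 + (1/3) * L ^ 3 * b
  | _ => 0
  end.

Definition lnuS (b : R) (k : nat) (y : R) : R :=
  let L := ln y in
  match k with
  | 1%nat => - L
  | 2%nat => - b + L * b - (1/2) * L ^ 2
  | 3%nat => b + (3/2) * b ^ 2 - 2 * L * b - L * b ^ 2 + (3/2) * L ^ 2 * b - (1/3) * L ^ 3
  | 4%nat => - 2 * b - (9/2) * b ^ 2 - (11/6) * b ^ 3 + 3 * L * b + (13/2) * L * b ^ 2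
             + L * b ^ 3 - 3 * L ^ 2 * b - 3 * L ^ 2 * b ^ 2 + (11/6) * L ^ 3 * b - (1/4) * L ^ 4
  | _ => 0
  end.

Definition invuS (b : R) (k : nat) (y : R) : R :=
  let L := ln y in
  match k with
  | 0%nat => 1
  | 1%nat => L
  | 2%nat => b - L * b + L ^ 2
  | 3%nat => - b - (3/2) * b ^ 2 + 3 * L * b + L * b ^ 2 - (5/2) * L ^ 2 * b + L ^ 3
  | 4%nat => 2 * b + 5 * b ^ 2 + (11/6) * b ^ 3 - 4 * L * b - 9 * L * b ^ 2 - L * b ^ 3
             + 6 * L ^ 2 * b + (9/2) * L ^ 2 * b ^ 2 - (13/3) * L ^ 3 * b + L ^ 4
  | _ => 0
  end.

Definition sS (b : R) (k : nat) (y : R) : R :=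
  let L := ln y in
  match k with
  | 1%nat => - b
  | 2%nat => b + b ^ 2 - L * b
  | 3%nat => - 2 * b - 4 * b ^ 2 - b ^ 3 + 2 * L * b + 3 * L * b ^ 2 - L ^ 2 * b
  | 4%nat => 6 * b + 14 * b ^ 2 + (19/2) * b ^ 3 + b ^ 4 - 6 * L * b - 14 * L * b ^ 2
             - 6 * L * b ^ 3 + 3 * L ^ 2 * b + (11/2) * L ^ 2 * b ^ 2 - L ^ 3 * b
  | _ => 0
  end.

Definition lnsS (b : R) (k : nat) (y : R) : R :=
  let L := ln y in
  match k with
  | 1%nat => - b
  | 2%nat => b + (1/2) * b ^ 2 - L * b
  | 3%nat => - 2 * b - 3 * b ^ 2 - (1/3) * b ^ 3 + 2 * L * b + 2 * L * b ^ 2 - L ^ 2 * b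
  | 4%nat => 6 * b + (23/2) * b ^ 2 + (11/2) * b ^ 3 + (1/4) * b ^ 4 - 6 * L * b
             - 11 * L * b ^ 2 - 3 * L * b ^ 3 + 3 * L ^ 2 * b + 4 * L ^ 2 * b ^ 2 - L ^ 3 * b
  | _ => 0
  end.

Ltac coef_eq := let k := fresh "k" in let y := fresh "y" in let Hk := fresh "Hk" in
  intros k y Hk; destruct k as [|[|[|[|[|k]]]]]; [..|lia];
  unfold spoly4, smul, sadd, sscal, scst, sinv, zS, uS, lnuS, invuS, sS, lnsS, dcoef, f1, f2, f3, f4;
  simpl; field.

Ltac pbS := let k := fresh "k" in intros k; destruct k as [|[|[|[|[|k]]]]];
  unfold zS, uS, lnuS, invuS, sS, lnsS, dcoef; cbv beta iota zeta; pb.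

Lemma expands_zs b : expands (zs b) (zS b).
Proof.
  apply (expands_ext (trunc (zS b))).
  - generalize (at_infty_ge 1). apply filter_imp. intros y Hy.
    unfold trunc, zs, zS. simpl. field. lra.
  - apply expands_trunc. pbS.
Qed.

Lemma expands_us b : expands (us b) (uS b).
Proof.
  apply (expands_coef _ (smul (sadd (zS b) (scst (fun y => - ln y))) sinv)); [coef_eq | pbS |].
  apply (expands_ext (fun y => (zs b y + - ln y) * / y)); [apply filter_forall; reflexivity|].
  apply expands_mul; [apply expands_add | exact expands_inv].
  - apply expands_zs.
  - apply expands_cst. pb.
Qed.

Lemma us_small b : at_infty (fun y => Rabs (us b y) <= / 2).
Proof. apply small_of_Pby. apply (expands_Pby _ (uS b)); [apply expands_us | reflexivity]. Qed.

Lemma expands_ln1p_us b : expands (fun y => ln (1 + us b y)) (lnuS b).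
Proof.
  apply (expands_coef _ (spoly4 0 1 (- / 2) (/ 3) (- / 4) (uS b))); [coef_eq | pbS |].
  apply expands_ln1p; [apply expands_us | reflexivity].
Qed.

Lemma expands_inv1p_us b : expands (fun y => / (1 + us b y)) (invuS b).
Proof.
  apply (expands_coef _ (spoly4 1 (-1) 1 (-1) 1 (uS b))); [coef_eq | pbS |].
  apply expands_inv1p; [apply expands_us | reflexivity].
Qed.

Lemma xs_factor b y : 0 < y -> xs b y = y * (1 + us b y).
Proof. intros Hy. unfold xs, us. field. lra. Qed.

Lemma xs_ge_half b : at_infty (fun y => y / 2 <= xs b y).
Proof.
  generalize (filter_and _ _ (us_small b) (at_infty_ge 1)). apply filter_imp.
  intros y [Hu Hy]. apply Rabs_le_between in Hu. rewrite xs_factor by lra. nra.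
Qed.

(* S5(xs) = S5 evaluated at 1/xs = (1/y) (1 / (1 + u)); its expansion, the
   consequence S5(xs) -> 1, and the expansion of ln S5(xs). *)
Lemma expands_S5_xs b : expands (fun y => S5 b (xs b y) - 1) (sS b).
Proof.
  apply (expands_coef _ (spoly4 0 (f1 b) (f2 b) (f3 b) (f4 b) (smul sinv (invuS b))));
    [coef_eq | pbS |].
  apply (expands_ext (fun y => poly4 0 (f1 b) (f2 b) (f3 b) (f4 b) (/ y * / (1 + us b y)))).
  - generalize (filter_and _ _ (us_small b) (at_infty_ge 1)). apply filter_imp.
    intros y [Hu Hy]. apply Rabs_le_between in Hu.
    unfold S5, poly4. rewrite xs_factor, Rinv_mult by lra. ring.
  - apply expands_poly4, expands_mul; [exact expands_inv | apply expands_inv1p_us].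
Qed.

Lemma S5_xs_near1 b : at_infty (fun y => Rabs (S5 b (xs b y) - 1) <= / 2).
Proof. apply small_of_Pby. apply (expands_Pby _ (sS b)); [apply expands_S5_xs | reflexivity]. Qed.

Lemma expands_ln_S5_xs b : expands (fun y => ln (S5 b (xs b y))) (lnsS b).
Proof.
  apply (expands_coef _ (spoly4 0 1 (- / 2) (/ 3) (- / 4) (sS b))); [coef_eq | pbS |].
  apply (expands_ext (fun y => ln (1 + (S5 b (xs b y) - 1))));
    [apply filter_forall; intros y; f_equal; ring|].
  apply expands_ln1p; [apply expands_S5_xs | reflexivity].
Qed.

Lemma residual_O5 b : O5 (residual b).
Proof.
  pose (series := sadd (zS b) (sadd (sscal b (lnuS b)) (sscal (-1) (lnsS b)))).
  apply (expands_O5_of_zero _ series); [|unfold series; coef_eq].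
  apply (expands_ext (fun y => zs b y + (b * ln (1 + us b y) + -1 * ln (S5 b (xs b y))))).
  - generalize (filter_and _ _ (us_small b) (at_infty_ge 1)). apply filter_imp.
    intros y [Hu Hy]. apply Rabs_le_between in Hu.
    unfold residual. rewrite (xs_factor b y), ln_mult by lra.
    replace (y * (1 + us b y) - y + ln y) with (zs b y) by (unfold us; field; lra). ring.
  - apply expands_add; [apply expands_zs | apply expands_add; apply expands_scal].
    + apply expands_ln1p_us.
    + apply expands_ln_S5_xs.
Qed.

Lemma gamma_integrand_exp a t : 0 < t -> gamma_integrand a t = exp ((a - 1) * ln t - t).
Proof. intros Ht. unfold gamma_integrand, Rpower. rewrite <- exp_plus. f_equal; ring. Qed.

Lemma gamma_integrand_pos a t : 0 < gamma_integrand a t.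
Proof. apply Rmult_lt_0_compat; apply exp_pos. Qed.

Lemma gamma_integrand_cont a t : 0 < t -> continuous (gamma_integrand a) t.
Proof.
  intros Ht. apply (ex_derive_continuous (gamma_integrand a)).
  unfold gamma_integrand, Rpower. auto_derive. lra.
Qed.

Lemma ex_RInt_gamma_integrand a x T : 0 < x <= T -> ex_RInt (gamma_integrand a) x T.
Proof.
  intros HxT. apply (ex_RInt_continuous (V := R_CompleteNormedModule)). intros t Ht.
  rewrite Rmin_left in Ht by lra. apply gamma_integrand_cont. lra.
Qed.

(* Integration by parts, iterated five times, in closed form: with
   prim t = - t^(a-1) e^(-t) S5(t), one has
   prim' t = t^(a-1) e^(-t) - f5 t^(a-6) e^(-t). *)
Definition prim (a t : R) : R := - (gamma_integrand a t * S5 (1 - a) t).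
Definition ibp_rem (a t : R) : R := f5 (1 - a) * gamma_integrand a t * (/ t) ^ 5.

Lemma log_power_vs_half s x t : 0 < x -> 2 * Rabs s <= x -> x <= t ->
  s * (ln t - ln x) <= (t - x) / 2.
Proof.
  intros Hx Hs Ht.
  assert (Hl : 0 <= ln t - ln x) by (pose proof (ln_le x t Hx Ht); lra).
  assert (Hq : ln t - ln x <= (t - x) / x).
  { rewrite <- ln_div by lra. replace ((t - x) / x) with (t / x - 1) by (field; lra).
    apply ln_le_sub1, Rdiv_lt_0_compat; lra. }
  assert (Hsx : s <= x / 2) by (pose proof (Rle_abs s); lra).
  destruct (Rle_dec s 0) as [Hneg | Hpos]; [nra|].
  assert (Hq0 : 0 <= (t - x) / x) by (apply Rmult_le_pos; [lra | apply Rlt_le, Rinv_0_lt_compat; lra]).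
  apply Rle_trans with (x / 2 * ((t - x) / x)); [nra|].
  right. field. lra.
Qed.

Definition rem_const (a x : R) : R :=
  Rabs (f5 (1 - a)) * (gamma_integrand a x * (/ x) ^ 5 * exp (x / 2)).

Lemma ibp_rem_decay a x t : 1 <= x -> 2 * Rabs (a - 6) <= x -> x <= t ->
  Rabs (ibp_rem a t) <= rem_const a x * exp (- t / 2).
Proof.
  intros Hx Ha Ht.
  assert (Hg5 : forall s, 0 < s -> gamma_integrand a s * (/ s) ^ 5 = exp ((a - 6) * ln s - s)).
  { intros s Hs. rewrite gamma_integrand_exp by lra.
    assert (E : / s = exp (- ln s)) by (rewrite exp_Ropp, exp_ln; lra).
    rewrite E, exp_pow_nat, <- exp_plus. f_equal. simpl. ring. }
  unfold ibp_rem, rem_const.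
  rewrite Rmult_assoc, Rabs_mult, Rmult_assoc. apply Rmult_le_compat_l; [apply Rabs_pos|].
  rewrite !Hg5, Rabs_right by (try apply Rle_ge, Rlt_le, exp_pos; lra).
  rewrite <- !exp_plus. apply exp_le_mono.
  pose proof (log_power_vs_half (a - 6) x t ltac:(lra) Ha Ht). lra.
Qed.

(* Adding +- (rem_const) e^(-t/2) to the remainder gives explicit antiderivatives. *)
Lemma ibp_bracket a c x T : 0 < x <= T ->
  is_RInt (fun t => gamma_integrand a t - ibp_rem a t + c * exp (- t / 2)) x T
    ((prim a T - 2 * c * exp (- T / 2)) - (prim a x - 2 * c * exp (- x / 2))).
Proof.
  intros HxT. apply (is_RInt_derive (fun t => prim a t - 2 * c * exp (- t / 2))).
  - intros t Ht. rewrite Rmin_left in Ht by lra.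
    unfold prim, ibp_rem, gamma_integrand, Rpower, S5, poly4, f1, f2, f3, f4, f5.
    auto_derive. lra. unfold Rdiv. field. lra.
  - intros t Ht. rewrite Rmin_left in Ht by lra.
    apply (ex_derive_continuous (fun t => gamma_integrand a t - ibp_rem a t + c * exp (- t / 2))).
    unfold ibp_rem, gamma_integrand, Rpower. auto_derive. repeat split; lra.
Qed.

Lemma RInt_gamma_integrand a x T : 1 <= x <= T -> 2 * Rabs (a - 6) <= x ->
  Rabs (RInt (gamma_integrand a) x T - (prim a T - prim a x))
    <= 2 * Rabs (f5 (1 - a)) * gamma_integrand a x * (/ x) ^ 5.
Proof.
  intros HxT Ha.
  set (K := rem_const a x).
  assert (HK : 0 <= K).
  { unfold K, rem_const. apply Rmult_le_pos; [apply Rabs_pos|].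
    apply Rmult_le_pos; [apply Rmult_le_pos|].
    - apply Rlt_le, gamma_integrand_pos.
    - apply pow_le, Rlt_le, Rinv_0_lt_compat. lra.
    - apply Rlt_le, exp_pos. }
  assert (Hex := ex_RInt_gamma_integrand a x T ltac:(lra)).
  assert (Hupper := ibp_bracket a K x T ltac:(lra)).
  assert (Hlower := ibp_bracket a (- K) x T ltac:(lra)).
  assert (Hpt : forall t, x <= t <= T ->
      Rabs (gamma_integrand a t - (gamma_integrand a t - ibp_rem a t)) <= K * exp (- t / 2)).
  { intros t Ht. replace (gamma_integrand a t - (gamma_integrand a t - ibp_rem a t))
      with (ibp_rem a t) by ring. apply ibp_rem_decay; lra. }
  assert (Hle1 : RInt (gamma_integrand a) x T
                 <= RInt (fun t => gamma_integrand a t - ibp_rem a t + K * exp (- t / 2)) x T).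
  { apply RInt_le; [lra | exact Hex | eexists; exact Hupper|].
    intros t Ht. specialize (Hpt t ltac:(lra)). apply Rabs_le_between' in Hpt. lra. }
  assert (Hle2 : RInt (fun t => gamma_integrand a t - ibp_rem a t + - K * exp (- t / 2)) x T
                 <= RInt (gamma_integrand a) x T).
  { apply RInt_le; [lra | eexists; exact Hlower | exact Hex|].
    intros t Ht. specialize (Hpt t ltac:(lra)). apply Rabs_le_between' in Hpt. lra. }
  rewrite (is_RInt_unique _ _ _ _ Hupper) in Hle1.
  rewrite (is_RInt_unique _ _ _ _ Hlower) in Hle2.
  assert (HKx : 2 * K * exp (- x / 2) = 2 * Rabs (f5 (1 - a)) * gamma_integrand a x * (/ x) ^ 5).
  { unfold K, rem_const.
    replace (exp (x / 2)) with (/ exp (- x / 2))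
      by (rewrite <- exp_Ropp; f_equal; field).
    field. split; [lra | apply Rgt_not_eq, exp_pos]. }
  pose proof (exp_pos (- T / 2)).
  apply Rabs_le_between'. nra.
Qed.

(* x^s e^(-x) -> 0 as x -> +oo: eventually s ln x <= x / 2, and e^(-x/2) <= 1 / (1 + x/2). *)
Lemma power_exp_vanishes s eps : 0 < eps -> at_infty (fun T => exp (s * ln T - T) <= eps).
Proof.
  intros Heps. assert (Hhalf : 0 < / 2) by lra.
  assert (Hslog : Pb (fun T => s * ln T)) by pb.
  generalize (filter_and _ _ (Pb_small _ Hslog _ Hhalf) (at_infty_ge (Rmax 1 (2 / eps)))).
  apply filter_imp. intros T [Hsmall HT].
  assert (HT1 : 1 <= T) by (eapply Rle_trans; [apply Rmax_l | exact HT]).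
  assert (HTe : 2 / eps <= T) by (eapply Rle_trans; [apply Rmax_r | exact HT]).
  assert (Hsl : s * ln T <= T / 2).
  { pose proof (Rle_abs (s * ln T)).
    apply Rmult_le_compat_r with (r := T) in Hsmall; [|lra].
    rewrite Rmult_assoc, Rinv_l, Rmult_1_r in Hsmall by lra. lra. }
  apply Rle_trans with (exp (- (T / 2))); [apply exp_le_mono; lra|].
  rewrite exp_Ropp. pose proof (exp_ineq1_le (T / 2)).
  apply Rle_trans with (/ (1 + T / 2)); [apply Rinv_le_contravar; lra|].
  apply Rmult_le_reg_r with (1 + T / 2); [lra|]. rewrite Rinv_l by lra.
  assert (Hprod : eps * (2 / eps) = 2) by (field; lra). nra.
Qed.

Lemma prim_vanishes a eps : 0 < eps -> at_infty (fun T => Rabs (prim a T) <= eps).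
Proof.
  intros Heps. set (C := 1 + S5_lip (1 - a)).
  pose proof (S5_lip_nonneg (1 - a)) as Hlip.
  assert (HeC : 0 < eps / C) by (apply Rdiv_lt_0_compat; unfold C; lra).
  generalize (filter_and _ _ (power_exp_vanishes (a - 1) (eps / C) HeC) (at_infty_ge 1)).
  apply filter_imp. intros T [HgT HT].
  assert (HS : Rabs (S5 (1 - a) T) <= C).
  { pose proof (S5_near1 (1 - a) T HT) as HS1. pose proof (inv_le1 T HT).
    assert (S5_lip (1 - a) * / T <= S5_lip (1 - a)) by nra.
    apply Rabs_le_between' in HS1. apply Rabs_le. unfold C. lra. }
  unfold prim. rewrite Rabs_Ropp, Rabs_mult, gamma_integrand_exp by lra.
  rewrite Rabs_right by (apply Rle_ge, Rlt_le, exp_pos).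
  replace eps with (eps / C * C) by (field; unfold C; lra).
  apply Rmult_le_compat; [apply Rlt_le, exp_pos | apply Rabs_pos | exact HgT | exact HS].
Qed.

Lemma upper_gamma_cut a x v B eps : is_upper_gamma a x v -> 0 < eps ->
  exists T, B <= T /\ Rabs (RInt (gamma_integrand a) x T - v) < eps /\ Rabs (prim a T) <= eps.
Proof.
  intros Hv Heps. destruct (Hv eps Heps) as (M & HM).
  destruct (filter_and _ _ (prim_vanishes a eps Heps) (at_infty_ge (Rmax B M))) as (T0 & HT0).
  destruct (HT0 (T0 + 1) ltac:(lra)) as [HP HT].
  exists (T0 + 1). split; [eapply Rle_trans; [apply Rmax_l | exact HT]|].
  destruct (HM (T0 + 1)) as (pr & Hpr); [eapply Rle_trans; [apply Rmax_r | exact HT]|].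
  rewrite <- RInt_Reals in Hpr. split; assumption.
Qed.

Lemma upper_gamma_expansion a x v : 1 <= x -> 2 * Rabs (a - 6) <= x -> is_upper_gamma a x v ->
  Rabs (v - gamma_integrand a x * S5 (1 - a) x)
    <= 2 * Rabs (f5 (1 - a)) * gamma_integrand a x * (/ x) ^ 5.
Proof.
  intros Hx Ha Hv. apply Rle_plus_epsilon. intros eps Heps.
  destruct (upper_gamma_cut a x v x (eps / 2) Hv ltac:(lra)) as (T & HT & Hint & HP).
  pose proof (RInt_gamma_integrand a x T (conj Hx HT) Ha) as Hfin.
  unfold prim in *. apply Rabs_le_between' in Hfin.
  apply Rabs_def2 in Hint. apply Rabs_le_between in HP. apply Rabs_le_between'. lra.
Qed.

(* Lower bound: Gamma(a, x) >= Gamma(a, X) for x <= X, and the expansion at X. *)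
Lemma upper_gamma_lower a x X v : 0 < x <= X -> 1 <= X -> 2 * Rabs (a - 6) <= X ->
  is_upper_gamma a x v ->
  gamma_integrand a X * S5 (1 - a) X - 2 * Rabs (f5 (1 - a)) * gamma_integrand a X * (/ X) ^ 5
    <= v.
Proof.
  intros HxX HX Ha Hv. apply Rle_plus_epsilon. intros eps Heps.
  destruct (upper_gamma_cut a x v X (eps / 2) Hv ltac:(lra)) as (T & HT & Hint & HP).
  pose proof (RInt_gamma_integrand a X T (conj HX HT) Ha) as Hfin.
  assert (Hsplit : RInt (gamma_integrand a) x X + RInt (gamma_integrand a) X T
                   = RInt (gamma_integrand a) x T).
  { apply (RInt_Chasles (V := R_CompleteNormedModule));
      apply ex_RInt_gamma_integrand; lra. }
  assert (Hpos : 0 <= RInt (gamma_integrand a) x X).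
  { apply RInt_ge_0; [lra | apply ex_RInt_gamma_integrand; lra|].
    intros t _. apply Rlt_le, gamma_integrand_pos. }
  unfold prim in *. apply Rabs_le_between' in Hfin.
  apply Rabs_def2 in Hint. apply Rabs_le_between in HP. lra.
Qed.

Lemma is_Gamma_unique a G G' : is_Gamma a G -> is_Gamma a G' -> G = G'.
Proof.
  intros H1 H2. apply Req_le_aux. intros [eps Heps]. simpl.
  destruct (H1 (eps / 2)) as (d1 & M1 & Hd1 & HH1); [lra|].
  destruct (H2 (eps / 2)) as (d2 & M2 & Hd2 & HH2); [lra|].
  set (e := Rmin d1 d2 / 2).
  assert (He : 0 < Rmin d1 d2) by (apply Rmin_glb_lt; lra).
  pose proof (Rmin_l d1 d2). pose proof (Rmin_r d1 d2).
  destruct (HH1 e (Rmax M1 M2) ltac:(unfold e; lra) (Rmax_l _ _)) as (pr1 & Hp1).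
  destruct (HH2 e (Rmax M1 M2) ltac:(unfold e; lra) (Rmax_r _ _)) as (pr2 & Hp2).
  rewrite (RiemannInt_P5 pr1 pr2) in Hp1.
  apply Rabs_def2 in Hp1. apply Rabs_def2 in Hp2. apply Rabs_le. lra.
Qed.

Definition model_eq (b y x S : R) : Prop := x - y + ln y = - b * (ln x - ln y) + ln S.

(* A solution with S in [1/2, 2] is at least y / 2: otherwise 0 <= ln x <= ln y and
   x >= y - (1 + |b|) ln y - 1, which exceeds y / 2 for large y. *)
Lemma model_solution_large b : at_infty (fun y =>
  forall x S, 1 <= x -> / 2 <= S <= 2 -> model_eq b y x S -> y / 2 <= x).
Proof.
  assert (Hlog : Pb (fun y => (1 + Rabs b) * ln y + 1)) by pb.
  assert (Hhalf : 0 < / 2) by lra.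
  generalize (filter_and _ _ (Pb_small _ Hlog (/ 2) Hhalf) (at_infty_ge 1)).
  apply filter_imp. intros y [Hsmall Hy] x S Hx HS Heq.
  destruct (Rle_dec y x) as [Hyx | Hxy]; [lra|].
  pose proof (ln_nonneg y Hy). pose proof (ln_nonneg x Hx).
  assert (Hlx : ln x <= ln y) by (apply ln_le; lra).
  assert (HlS := ln_abs_le1 S HS). apply Rabs_le_between in HlS.
  assert (Hb : Rabs (b * (ln x - ln y)) <= Rabs b * ln y).
  { rewrite Rabs_mult, (Rabs_left1 (ln x - ln y)) by lra.
    apply Rmult_le_compat_l; [apply Rabs_pos | lra]. }
  apply Rabs_le_between in Hb.
  rewrite Rabs_right in Hsmall by (apply Rle_ge; pose proof (Rabs_pos b); nra).
  apply Rmult_le_compat_r with (r := y) in Hsmall; [|lra].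
  rewrite Rmult_assoc, Rinv_l, Rmult_1_r in Hsmall by lra.
  unfold model_eq in Heq. lra.
Qed.

(* Pointwise error estimate: subtracting the model equations at x and at xs,
   e = x - xs is controlled by Lipschitz bounds for ln and S5 on [y/2, +oo),
   by the perturbation S - S5(x), and by the residual of xs. *)
Lemma model_error b y x S : 2 <= y -> y / 2 <= x -> y / 2 <= xs b y ->
  / 2 <= S -> / 2 <= S5 b x -> / 2 <= S5 b (xs b y) -> model_eq b y x S ->
  Rabs (x - xs b y) <= (2 * Rabs b / y + 8 * S5_lip b / y ^ 2) * Rabs (x - xs b y)
                      + 2 * Rabs (S - S5 b x) + Rabs (residual b y).
Proof.
  intros Hy Hx Hxs HS HSx HSxs Heq.
  set (z := xs b y) in *. set (e := Rabs (x - z)).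
  assert (Hid : x - z = - b * (ln x - ln z) + (ln S - ln (S5 b x))
                        + (ln (S5 b x) - ln (S5 b z)) + - residual b y).
  { unfold residual, model_eq in *. fold z. lra. }
  assert (B1 : Rabs b * Rabs (ln x - ln z) <= 2 * Rabs b / y * e).
  { replace (2 * Rabs b / y * e) with (Rabs b * (e / (y / 2))) by (field; lra).
    apply Rmult_le_compat_l; [apply Rabs_pos | apply ln_lipschitz; lra]. }
  assert (B2 : Rabs (ln S - ln (S5 b x)) <= 2 * Rabs (S - S5 b x)).
  { replace (2 * Rabs (S - S5 b x)) with (Rabs (S - S5 b x) / / 2) by field.
    apply ln_lipschitz; lra. }
  assert (B3 : Rabs (ln (S5 b x) - ln (S5 b z)) <= 8 * S5_lip b / y ^ 2 * e).
  { eapply Rle_trans; [apply (ln_lipschitz (/ 2)); lra|].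
    pose proof (S5_lipschitz b x z ltac:(lra) ltac:(lra)) as HS5.
    pose proof (inv_lipschitz (y / 2) x z ltac:(lra) Hx Hxs) as Hinv.
    pose proof (S5_lip_nonneg b).
    replace (8 * S5_lip b / y ^ 2 * e) with (S5_lip b * (e / (y / 2) ^ 2) / / 2) by (field; lra).
    apply Rmult_le_compat_r; [lra|].
    eapply Rle_trans; [exact HS5 | apply Rmult_le_compat_l; assumption]. }
  unfold e at 1. rewrite Hid, Rmult_plus_distr_r.
  pose proof (Rabs_triang (- b * (ln x - ln z) + (ln S - ln (S5 b x)) + (ln (S5 b x) - ln (S5 b z)))
                          (- residual b y)).
  pose proof (Rabs_triang (- b * (ln x - ln z) + (ln S - ln (S5 b x))) (ln (S5 b x) - ln (S5 b z))).
  pose proof (Rabs_triang (- b * (ln x - ln z)) (ln S - ln (S5 b x))).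
  rewrite Rabs_Ropp in *. rewrite Rabs_mult, Rabs_Ropp in *.
  lra.
Qed.

Lemma contraction_factor b y : 8 * Rabs b + 32 * S5_lip b + 2 <= y ->
  2 * Rabs b / y + 8 * S5_lip b / y ^ 2 <= / 2.
Proof.
  intros Hy. pose proof (S5_lip_nonneg b). pose proof (Rabs_pos b).
  assert (2 * Rabs b / y <= / 4).
  { apply Rmult_le_reg_r with y; [lra|]. unfold Rdiv. rewrite Rmult_assoc, Rinv_l by lra. lra. }
  assert (8 * S5_lip b / y ^ 2 <= / 4).
  { apply Rmult_le_reg_r with (y ^ 2); [nra|]. unfold Rdiv. rewrite Rmult_assoc, Rinv_l by nra.
    nra. }
  lra.
Qed.

Lemma fifth_order_small C eps x y : 0 <= C -> 0 < eps -> 2 <= y -> y / 2 <= x ->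
  256 * C / eps <= y -> C * (/ x) ^ 5 <= eps / 8 * (/ y) ^ 4.
Proof.
  intros HC Heps Hy Hx HyC. pose proof (inv_le1 y ltac:(lra)) as Hw.
  assert (Hxw : / x <= 2 * / y)
    by (replace (2 * / y) with (/ (y / 2)) by (field; lra); apply Rinv_le_contravar; lra).
  assert (Hx5 : (/ x) ^ 5 <= (2 * / y) ^ 5)
    by (apply pow_incr; split; [apply Rlt_le, Rinv_0_lt_compat; lra | exact Hxw]).
  apply Rle_trans with (C * (2 * / y) ^ 5); [apply Rmult_le_compat_l; assumption|].
  replace (C * (2 * / y) ^ 5) with (32 * C * / y * (/ y) ^ 4) by ring.
  apply Rmult_le_compat_r; [apply pow_le; lra|].
  apply Rmult_le_reg_r with y; [lra|]. rewrite Rmult_assoc, Rinv_l by lra.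
  apply Rmult_le_compat_r with (r := eps / 8) in HyC; [|lra].
  replace (256 * C / eps * (eps / 8)) with (32 * C) in HyC by (field; lra). lra.
Qed.

Lemma model_stability b C : 0 <= C -> forall eps, 0 < eps -> at_infty (fun y =>
  forall x S, 1 <= x -> / 2 <= S <= 2 -> / 2 <= S5 b x ->
  Rabs (S - S5 b x) <= C * (/ x) ^ 5 -> model_eq b y x S ->
  Rabs (x - xs b y) <= eps * (/ y) ^ 4).
Proof.
  intros HC eps Heps.
  assert (Heps4 : 0 < eps / 4) by lra.
  pose proof (S5_lip_nonneg b) as Hlip. pose proof (Rabs_pos b) as Hb.
  set (Y := Rmax (8 * Rabs b + 32 * S5_lip b + 2) (256 * C / eps)).
  generalize (filter_and _ _ (filter_and _ _ (model_solution_large b) (xs_ge_half b))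
               (filter_and _ _ (filter_and _ _ (S5_xs_near1 b) (O5_small _ (residual_O5 b) _ Heps4))
                  (at_infty_ge Y))).
  apply filter_imp. intros y [[Hlarge Hxs] [[HSxs Hres] HY]] x S Hx HS HSx Hth Heq.
  assert (Hy : 8 * Rabs b + 32 * S5_lip b + 2 <= y) by (eapply Rle_trans; [apply Rmax_l | exact HY]).
  assert (HyC : 256 * C / eps <= y) by (eapply Rle_trans; [apply Rmax_r | exact HY]).
  pose proof (Hlarge x S Hx HS Heq) as Hxy.
  apply Rabs_le_between in HSxs.
  pose proof (model_error b y x S ltac:(lra) Hxy Hxs ltac:(lra) HSx ltac:(lra) Heq) as Herr.
  set (e := Rabs (x - xs b y)) in *. pose proof (Rabs_pos (x - xs b y)) as He. fold e in He.
  pose proof (contraction_factor b y Hy) as Hcoef.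
  pose proof (fifth_order_small C eps x y HC Heps ltac:(lra) Hxy HyC) as Hpert.
  assert (Hce : (2 * Rabs b / y + 8 * S5_lip b / y ^ 2) * e <= / 2 * e)
    by (apply Rmult_le_compat_r; assumption).
  lra.
Qed.

(* Beyond this threshold S5(x) is within 1/4 of 1 and the O(x^-5) error term of
   the expansion of Gamma(a, x) is at most 1/4 relative to x^(a-1) e^(-x). *)
Definition x_thr (a : R) : R :=
  Rmax (Rmax 2 (2 * Rabs (a - 6))) (4 * S5_lip (1 - a) + 8 * Rabs (f5 (1 - a))).

Lemma x_thr_props a t : x_thr a <= t ->
  2 <= t /\ 2 * Rabs (a - 6) <= t /\ Rabs (S5 (1 - a) t - 1) <= / 4
  /\ 2 * Rabs (f5 (1 - a)) * (/ t) ^ 5 <= / 4.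
Proof.
  intros Ht. unfold x_thr in Ht.
  assert (H2 : 2 <= t)
    by (eapply Rle_trans; [eapply Rle_trans; [apply Rmax_l | apply Rmax_l] | exact Ht]).
  assert (Ha : 2 * Rabs (a - 6) <= t)
    by (eapply Rle_trans; [eapply Rle_trans; [apply Rmax_r | apply Rmax_l] | exact Ht]).
  assert (Hc : 4 * S5_lip (1 - a) + 8 * Rabs (f5 (1 - a)) <= t)
    by (eapply Rle_trans; [apply Rmax_r | exact Ht]).
  pose proof (S5_lip_nonneg (1 - a)) as Hlip. pose proof (Rabs_pos (f5 (1 - a))).
  pose proof (inv_le1 t ltac:(lra)) as Hw.
  assert (Hwt : / t * t = 1) by (field; lra).
  repeat split; try assumption.
  - eapply Rle_trans; [apply S5_near1; lra|].
    apply Rmult_le_reg_r with t; [lra|]. rewrite Rmult_assoc, Hwt. lra.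
  - pose proof (inv_pow_antitone t 1 5 ltac:(lra) ltac:(lia)) as Ht5. rewrite pow_1 in Ht5.
    apply Rle_trans with (2 * Rabs (f5 (1 - a)) * / t); [apply Rmult_le_compat_l; lra|].
    apply Rmult_le_reg_r with t; [lra|]. rewrite Rmult_assoc, Hwt. lra.
Qed.

(* If Gamma(a, x) = y^a e^(-y) with y large, then x is beyond the threshold:
   otherwise Gamma(a, x) >= Gamma(a, x_thr a) > 0 would stay bounded below. *)
Lemma solution_large a : at_infty (fun y =>
  forall x v, 0 < x -> is_upper_gamma a x v -> v = exp (a * ln y - y) -> x_thr a <= x).
Proof.
  set (X := x_thr a).
  destruct (x_thr_props a X (Rle_refl _)) as (HX2 & HXa & HS & Hrem).
  set (m := gamma_integrand a X * S5 (1 - a) X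
            - 2 * Rabs (f5 (1 - a)) * gamma_integrand a X * (/ X) ^ 5).
  assert (Hm : 0 < m).
  { apply Rabs_le_between in HS. pose proof (gamma_integrand_pos a X).
    replace m with (gamma_integrand a X * (S5 (1 - a) X - 2 * Rabs (f5 (1 - a)) * (/ X) ^ 5))
      by (unfold m; ring).
    apply Rmult_lt_0_compat; lra. }
  generalize (power_exp_vanishes a (m / 2) ltac:(lra)). apply filter_imp.
  intros y Hy x v Hx Hv Hvy.
  destruct (Rle_dec X x) as [HXx | HxX]; [exact HXx|].
  pose proof (upper_gamma_lower a x X v ltac:(lra) ltac:(lra) HXa Hv). fold m in H. lra.
Qed.

(* Beyond the threshold, Gamma(a, x) = y^a e^(-y) is the model equation with
   S = Gamma(a, x) / (x^(a-1) e^(-x)) = S5(x) + O(x^-5). *)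
Lemma solution_model_eq a y x v : x_thr a <= x -> is_upper_gamma a x v ->
  v = exp (a * ln y - y) ->
  exists S, / 2 <= S <= 2 /\ / 2 <= S5 (1 - a) x
    /\ Rabs (S - S5 (1 - a) x) <= 2 * Rabs (f5 (1 - a)) * (/ x) ^ 5
    /\ model_eq (1 - a) y x S.
Proof.
  intros Hx Hv Hvy.
  destruct (x_thr_props a x Hx) as (Hx2 & Hxa & HS5 & Hrem).
  pose proof (upper_gamma_expansion a x v ltac:(lra) Hxa Hv) as Hexp.
  pose proof (gamma_integrand_pos a x) as Hg.
  exists (v / gamma_integrand a x).
  assert (Hth : Rabs (v / gamma_integrand a x - S5 (1 - a) x)
                <= 2 * Rabs (f5 (1 - a)) * (/ x) ^ 5).
  { replace (v / gamma_integrand a x - S5 (1 - a) x)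
      with ((v - gamma_integrand a x * S5 (1 - a) x) * / gamma_integrand a x) by (field; lra).
    rewrite Rabs_mult, (Rabs_right (/ gamma_integrand a x))
      by (apply Rle_ge, Rlt_le, Rinv_0_lt_compat; lra).
    apply Rmult_le_reg_r with (gamma_integrand a x); [lra|].
    rewrite Rmult_assoc, Rinv_l, Rmult_1_r by lra.
    replace (2 * Rabs (f5 (1 - a)) * (/ x) ^ 5 * gamma_integrand a x)
      with (2 * Rabs (f5 (1 - a)) * gamma_integrand a x * (/ x) ^ 5) by ring.
    exact Hexp. }
  apply Rabs_le_between in HS5. pose proof (proj1 (Rabs_le_between' _ _ _) Hth).
  repeat split; try lra.
  assert (Hlnv : a * ln y - y = (a - 1) * ln x - x + ln (v / gamma_integrand a x)).
  { assert (Hvpos : 0 < v) by (rewrite Hvy; apply exp_pos).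
    rewrite <- (ln_exp (a * ln y - y)), <- Hvy, ln_div by assumption.
    rewrite gamma_integrand_exp, ln_exp by lra. ring. }
  unfold model_eq. nra.
Qed.

Lemma inversion_estimate a eps : 0 < eps -> at_infty (fun y =>
  forall x v, 0 < x -> is_upper_gamma a x v -> v = exp (a * ln y - y) ->
  Rabs (x - xs (1 - a) y) <= eps * (/ y) ^ 4).
Proof.
  intros Heps.
  assert (HC : 0 <= 2 * Rabs (f5 (1 - a))) by (pose proof (Rabs_pos (f5 (1 - a))); lra).
  generalize (filter_and _ _ (solution_large a) (model_stability (1 - a) _ HC eps Heps)).
  apply filter_imp. intros y [Hlarge Hstab] x v Hx Hv Hvy.
  pose proof (Hlarge x v Hx Hv Hvy) as Hthr.
  destruct (solution_model_eq a y x v Hthr Hv Hvy) as (S & HS & HS5 & Hpert & Heq).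
  destruct (x_thr_props a x Hthr) as (Hx2 & _).
  exact (Hstab x S ltac:(lra) HS HS5 Hpert Heq).
Qed.

Lemma approx4_xs a y : approx a y 4 = xs (1 - a) y.
Proof. reflexivity. Qed.

(* Dropping the terms of index > K costs o(y^-K): they are y^-(K+1) times
   a polylog-bounded function. *)
Lemma approx_truncation a K eps : (1 <= K <= 4)%nat -> 0 < eps ->
  at_infty (fun y => Rabs (approx a y 4 - approx a y K) <= eps * (/ y) ^ K).
Proof.
  intros HK Heps. set (b := 1 - a).
  assert (Hgen : forall h : R -> R, Pb h ->
    (forall y, 1 <= y -> approx a y 4 - approx a y K = (/ y) ^ K * (h y * / y)) ->
    at_infty (fun y => Rabs (approx a y 4 - approx a y K) <= eps * (/ y) ^ K)).
  { intros h Hh Hdiff. generalize (filter_and _ _ (Pb_small h Hh eps Heps) (at_infty_ge 1)).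
    apply filter_imp. intros y [Hsmall Hy]. pose proof (inv_le1 y Hy).
    rewrite Hdiff, Rabs_mult, <- RPow_abs, Rabs_mult, (Rabs_right (/ y)), Rmult_comm by lra.
    apply Rmult_le_compat_r; [apply pow_le; lra | exact Hsmall]. }
  destruct K as [|[|[|[|[|K]]]]]; try lia.
  - apply (Hgen (fun y => b * (dcoef b (ln y) 2 + dcoef b (ln y) 3 * / y
                               + dcoef b (ln y) 4 * (/ y) ^ 2))).
    + unfold dcoef. pb.
    + intros y Hy. unfold approx. simpl. fold b. field. lra.
  - apply (Hgen (fun y => b * (dcoef b (ln y) 3 + dcoef b (ln y) 4 * / y))).
    + unfold dcoef. pb.
    + intros y Hy. unfold approx. simpl. fold b. field. lra.
  - apply (Hgen (fun y => b * dcoef b (ln y) 4)).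
    + unfold dcoef. pb.
    + intros y Hy. unfold approx. simpl. fold b. field. lra.
  - apply (Hgen (fun _ => 0)); [pb | intros y Hy; ring].
Qed.

Lemma upper_gamma_at_solution a G q y x : is_Gamma a G -> 0 < q ->
  exp (- y) * Rpower y a = q * G -> Q_eq a x q ->
  exists v, is_upper_gamma a x v /\ v = exp (a * ln y - y).
Proof.
  intros HG Hq Hy (G' & v & HG' & Hv & Hqv).
  rewrite <- (is_Gamma_unique a G G' HG HG') in Hqv.
  assert (HG0 : G <> 0).
  { intros E. rewrite E in Hqv. unfold Rdiv in Hqv. rewrite Rinv_0, Rmult_0_r in Hqv. lra. }
  exists v. split; [exact Hv|].
  replace v with (q * G) by (rewrite Hqv; field; exact HG0).
  rewrite <- Hy. unfold Rpower. rewrite <- exp_plus. f_equal. ring.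
Qed.

(* Take y = x0(q) large: the upper gamma integral at x equals
   y^a e^(-y), so |x - xs| <= (eps/2) y^-4 by [inversion_estimate], and xs is
   within (eps/2) y^-K of the K-term approximation by [approx_truncation].
   (The hypothesis 0 < a is what makes Gamma(a) exist; the proof only uses
   [is_Gamma a G].) *)
Theorem mainTheorem6 (a G q1 : R) (x0 x : R -> R) (K : nat) :
  0 < a ->
  is_Gamma a G ->
  0 < q1 ->
  (forall q, 0 < q < q1 -> exp (- x0 q) * Rpower (x0 q) a = q * G) ->
  (forall M, exists delta, 0 < delta /\ forall q, 0 < q < delta -> M < x0 q) ->
  (forall q, 0 < q < q1 -> 0 < x q /\ Q_eq a (x q) q) ->
  (1 <= K <= 4)%nat ->
  forall eps, 0 < eps ->
    exists delta, 0 < delta /\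
      forall q, 0 < q < delta ->
        Rabs (x q - approx a (x0 q) K) <= eps / Rabs (x0 q ^ K).
Proof.
  intros _ HG Hq1 Hx0 Hx0inf Hx HK eps Heps.
  assert (Heps2 : 0 < eps / 2) by lra.
  destruct (filter_and _ _ (filter_and _ _ (inversion_estimate a _ Heps2)
    (approx_truncation a K _ HK Heps2)) (at_infty_ge 1)) as (M & HM).
  destruct (Hx0inf M) as (delta & Hdelta & Hlarge).
  exists (Rmin delta q1). split; [apply Rmin_glb_lt; assumption|].
  intros q Hq. pose proof (Rmin_l delta q1). pose proof (Rmin_r delta q1).
  destruct (HM (x0 q) (Hlarge q ltac:(lra))) as [[Hinv Htrunc] Hy].
  destruct (Hx q ltac:(lra)) as [Hxpos HQ].
  destruct (upper_gamma_at_solution a G q (x0 q) (x q) HG ltac:(lra) (Hx0 q ltac:(lra)) HQ)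
    as (v & Hv & Hvy).
  specialize (Hinv (x q) v Hxpos Hv Hvy). rewrite <- approx4_xs in Hinv.
  pose proof (inv_pow_antitone (x0 q) K 4 Hy ltac:(lia)) as Hpow.
  rewrite (Rabs_right (x0 q ^ K)) by (apply Rle_ge, pow_le; lra).
  unfold Rdiv. rewrite <- pow_inv.
  pose proof (Rabs_triang (x q - approx a (x0 q) 4) (approx a (x0 q) 4 - approx a (x0 q) K))
    as Htri.
  replace (x q - approx a (x0 q) 4 + (approx a (x0 q) 4 - approx a (x0 q) K))
    with (x q - approx a (x0 q) K) in Htri by ring.
  assert (eps / 2 * (/ x0 q) ^ 4 <= eps / 2 * (/ x0 q) ^ K) by (apply Rmult_le_compat_l; lra).
  lra.
Qed.
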